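(* Let $M$ be an $\mathfrak{S}$-module, $\mathfrak{S}=\mathbb{Z}[t]/(t^p-1)$, with $\ker(1-t)=0$. Then $N(t)=0$ on $M$ and $\operatorname{coker}(1-t)$ is a $\mathbb{Z}/p$-vector space. Let $(e_i)_{i\in I}$ be elements of $M$ that represent a $\mathbb{Z}/p$-basis of $\operatorname{coker}(1-t)$. Then the map $\psi\colon\bigoplus_{i\in I}\mathbb{Z}[t]/(N(t))\to M$, $(f_i)_{i\in I}\mapsto\sum_{i\in I}f_i(t)e_i$, is injective, and its cokernel is uniquely $p$-divisible.
   Context: $p$ is a prime and $N(t)=1+t+\dots+t^{p-1}$. Uniquely $p$-divisible means multiplication by $p$ is bijective. *)

From mathcomp Require Import all_boot all_order all_algebra.
Set Implicit Arguments. Unset Strict Implicit. Unset Printing Implicit Defensive.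
Import GRing.Theory.
Local Open Scope ring_scope.

(* An S-module, S = Z[t]/(t^p - 1), is an abelian group M with an additive
   endomorphism t such that t^p = id.  Action of f in Z[t] on M: *)
Definition polyact (M : zmodType) (t : M -> M) (f : {poly int}) (x : M) : M :=
  \sum_(k < size f) iter k t x *~ f`_k.

Definition Npoly (p : nat) : {poly int} := \sum_(k < p) 'X^k.

Definition pdivides (g f : {poly int}) : Prop := exists h : {poly int}, f = h * g.

Definition in_im1t (M : zmodType) (t : M -> M) (x : M) : Prop :=
  exists y : M, x = y - t y.

(* image of psi : (f_i)_i |-> sum_i f_i(t) e_i  (finitely supported families) *)
Definition in_impsi (M : zmodType) (t : M -> M) (I : eqType) (e : I -> M) (x : M) : Prop :=
  exists (s : seq I) (f : I -> {poly int}),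
    uniq s /\ x = \sum_(i <- s) polyact t (f i) (e i).

(* the classes of (e_i) form a Z/p-basis of coker(1-t) *)
Definition represents_basis (p : nat) (M : zmodType) (t : M -> M) (I : eqType) (e : I -> M) : Prop :=
  (forall x : M, exists (s : seq I) (c : I -> int),
      uniq s /\ in_im1t t (x - \sum_(i <- s) e i *~ c i)) /\
  (forall (s : seq I) (c : I -> int), uniq s ->
      in_im1t t (\sum_(i <- s) e i *~ c i) ->
      forall i, i \in s -> (p%:Z %| c i)%Z).

(* Since t^p = 1 and 1 - t is injective, (1 - t) N(t) = 1 - t^p = 0 forces N(t) = 0, so M
   is a module over Z[t]/(N), where 1 - t plays the role of the prime above p:
   (1 - t)^(p-1) = p G(t) modulo N, by the Frobenius congruence (1 - t)^p = 1 - t^p mod p.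
   If sum f_i e_i = 0, reducing modulo 1 - t gives p | f_i(1), so f_i = (1 - t) g_i mod N,
   and injectivity of 1 - t makes (g_i) a relation again.  Iterating, each f_i is congruent
   to a multiple of p^m modulo N for every m, hence divisible by N.  For the cokernel, the
   e_i span coker(1 - t), so every x is congruent to (1 - t)^(p-1) z = p G(t) z modulo the
   image of psi; conversely (1 - t) w in the image forces w in the image by the same lifting
   argument, and p y in the image gives (1 - t)^(p-1) y = G(t) (p y) in the image. *)

From HB Require Import structures.
From mathcomp Require Import all_boot all_order all_algebra.
From mathcomp Require Import ring.
Import GRing.Theory Num.Theory.
Local Open Scope ring_scope.
Set Implicit Arguments. Unset Strict Implicit.

Lemma seq_choice (I : eqType) (T : Type) (y0 : T) (s : seq I) (P : I -> T -> Prop) :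
  (forall i, i \in s -> exists y, P i y) ->
  exists g : I -> T, forall i, i \in s -> P i (g i).
Proof.
elim: s => [|a s IH] hP; first by exists (fun=> y0).
have [y Pay] := hP a (mem_head a s).
have [g Pg] := IH (fun i si => hP i (mem_behead (s := a :: s) si)).
exists (fun i => if i == a then y else g i) => i; rewrite inE.
by case: eqP => [-> | _ /Pg].
Qed.

Lemma exprD_prime (R : comPzRingType) (p : nat) (a b : R) : prime p ->
  exists S, (a + b) ^+ p = a ^+ p + b ^+ p + p%:R * S.
Proof.
case: p => [//|q] p_prime.
exists (\sum_(i < q) a ^+ (q - i) * b ^+ i.+1 *+ ('C(q.+1, i.+1) %/ q.+1)).
rewrite exprDn big_ord_recl big_ord_recr /= subn0 subnn bin0 binn !mulr1n.
rewrite expr0 mulr1 mul1r mulr_sumr -addrA [b ^+ _ + _]addrC addrA -addrA.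
congr (_ + (_ + _)); apply: eq_bigr => i _.
rewrite /bump /= add1n subSS mulr_natl -mulrnA divnK //.
by rewrite prime_dvd_bin //= ltnS ltn_ord.
Qed.

Lemma horner1_decomp (R : comNzRingType) (f : {poly R}) :
  exists q, f = (f.[1])%:P + (1 - 'X) * q.
Proof.
have /factor_theorem [q hq] : root (f - (f.[1])%:P) 1.
  by rewrite /root !hornerE subrr.
by exists (- q); rewrite -[f in LHS](subrK (f.[1])%:P) hq polyC1; ring.
Qed.

Lemma one_subX_neq0 (R : nzRingType) : (1 - 'X : {poly R}) != 0.
Proof. by rewrite -opprB oppr_eq0 -polyC1 polyXsubC_eq0. Qed.

Lemma pdivides_monic_small (d g : {poly int}) :
  d \is monic -> pdivides d g -> (size g < size d)%N -> g = 0.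
Proof.
move=> d_monic [h ->]; have [-> | h_neq0] := eqVneq h 0; first by rewrite mul0r.
rewrite size_Mmonic // -(prednK (_ : 0 < size h)%N) ?size_poly_gt0 // addSn /=.
by rewrite ltnNge leq_addl.
Qed.

Lemma modp_monic_pdivides (d f w : {poly int}) (c : int) : d \is monic ->
  pdivides d (f - c%:P * w) -> f %% d = c%:P * (w %% d).
Proof.
move=> d_monic [h hfw]; apply/eqP; rewrite -subr_eq0; apply/eqP.
have d_neq0 : d != 0 by apply: monic_neq0.
apply: (pdivides_monic_small d_monic).
  exists (h + c%:P * (w %/ d) - f %/ d).
  move: hfw; rewrite {1}(Pdiv.IdomainMonic.divp_eq d_monic f).
  rewrite {1}(Pdiv.IdomainMonic.divp_eq d_monic w) => hfw.
  by rewrite mulrBl mulrDl -hfw; ring.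
rewrite (leq_ltn_trans (size_polyD _ _)) // gtn_max ltn_modpN0 //= size_polyN.
by rewrite mul_polyC (leq_ltn_trans (size_scale_leq _ _)) ?ltn_modpN0.
Qed.

Lemma pdivides_monic_pexp (d f : {poly int}) (n : nat) : d \is monic -> (1 < n)%N ->
  (forall m, exists w, pdivides d (f - ((n%:Z) ^+ m)%:P * w)) -> pdivides d f.
Proof.
move=> d_monic n_gt1 congr_pexp.
suff r0 : f %% d = 0.
  by exists (f %/ d); rewrite {1}(Pdiv.IdomainMonic.divp_eq d_monic f) r0 addr0.
apply/polyP => k; rewrite coef0; set r := f %% d.
apply/eqP/negPn/negP; rewrite -absz_gt0 => rk_gt0.
have [w /(modp_monic_pdivides d_monic) rE] := congr_pexp `|(r`_k)%R|%N.
rewrite -/r in rE.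
have : (n ^ `|(r`_k)%R| %| `|(r`_k)%R|)%N.
  by rewrite {2}rE coefCM abszM abszX dvdn_mulr.
by move/(dvdn_leq rk_gt0); rewrite leqNgt ltn_expl.
Qed.

Lemma Npoly_geom (p : nat) : (1 - 'X) * Npoly p = 1 - 'X^p.
Proof. by rewrite /Npoly -opprB mulNr -subrX1 opprB. Qed.

Lemma horner1_Npoly (p : nat) : (Npoly p).[1] = p%:R.
Proof.
rewrite /Npoly horner_sum (eq_bigr (fun=> 1)) ?sumr_const ?card_ord // => i _.
by rewrite hornerXn expr1n.
Qed.

Lemma Npoly_monic (p : nat) : (0 < p)%N -> Npoly p \is monic.
Proof.
move=> p_gt0; rewrite -(monicMl _ (monicXsubC 1)) polyC1 /Npoly -subrX1.
by rewrite -polyC1 monicXnsubC.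
Qed.

Lemma pdivides_Npoly_subX (p : nat) (f : {poly int}) : (p%:Z %| f.[1])%Z ->
  exists g, pdivides (Npoly p) (f - (1 - 'X) * g).
Proof.
move=> /dvdzP [c f1E].
have [q fE] := horner1_decomp f; have [Q NE] := horner1_decomp (Npoly p).
rewrite horner1_Npoly in NE.
exists (q - c%:P * Q); exists c%:P.
rewrite [in LHS]fE f1E polyCM (_ : (p%:Z)%:P = Npoly p - (1 - 'X) * Q).
  by ring.
by rewrite NE addrK natz.
Qed.

Lemma expr_subX_Npoly (p : nat) : prime p ->
  exists G : {poly int}, (1 - 'X) ^+ p.-1 = Npoly p + p%:R * G.
Proof.
move=> p_prime; have p_gt0 := prime_gt0 p_prime.
have [B BE] : exists B, (1 - 'X) * ((1 - 'X) ^+ p.-1 - Npoly p) = p%:R * B.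
  have [S SE] := exprD_prime (1 : {poly int}) (- 'X) p_prime.
  rewrite mulrBr -exprS prednK // Npoly_geom SE expr1n exprNn.
  have [p2 | p_odd] := even_prime p_prime.
    by exists ('X^2 + S); rewrite p2 expr2 mulN1r opprK; ring.
  by exists S; rewrite -signr_odd p_odd expr1 mulN1r; ring.
have [q BE'] := horner1_decomp B.
have B1 : B.[1] = 0.
  have := congr1 (horner^~ 1) BE; rewrite /= -polyC_natr !hornerE.
  by move=> /esym/eqP; rewrite mulf_eq0 pnatr_eq0 eqn0Ngt p_gt0 => /eqP.
exists q; apply/(mulfI (one_subX_neq0 int)).
by rewrite -[LHS](subrK ((1 - 'X) * Npoly p)) -mulrBr BE BE' B1 add0r; ring.
Qed.

Section ZtModule.
Variables (M : zmodType) (t : M -> M).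
Hypothesis t_add : {morph t : x y / x + y}.

Lemma t_nmod_morphism : nmod_morphism t.
Proof. by split=> //; apply: (addrI (t 0)); rewrite -t_add !addr0. Qed.

#[local] HB.instance Definition _ := GRing.isNmodMorphism.Build M M t t_nmod_morphism.

Lemma iter_t0 k : iter k t 0 = 0.
Proof. by elim: k => //= k ->; rewrite raddf0. Qed.

Lemma iter_tD k : {morph iter k t : x y / x + y}.
Proof. by elim: k => // k IH x y /=; rewrite IH raddfD. Qed.

Lemma polyact_nmod_morphism f : nmod_morphism (polyact t f).
Proof.
split => [|x y]; rewrite /polyact; first by rewrite big1 // => k _; rewrite iter_t0 mul0rz.
by rewrite -big_split; apply: eq_bigr => k _; rewrite iter_tD mulrzDl.
Qed.

Lemma polyact0r f : polyact t f 0 = 0.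
Proof. exact: (polyact_nmod_morphism f).1. Qed.

Lemma polyactDr f : {morph polyact t f : x y / x + y}.
Proof. exact: (polyact_nmod_morphism f).2. Qed.

Lemma polyactBr f x y : polyact t f (x - y) = polyact t f x - polyact t f y.
Proof. by rewrite -[in RHS](subrK y x) polyactDr addrK. Qed.

Lemma polyactMnr f x n : polyact t f (x *+ n) = polyact t f x *+ n.
Proof. by elim: n => [|n IH]; rewrite ?polyact0r // !mulrS polyactDr IH. Qed.

Lemma polyact_sumr (J : Type) (s : seq J) (F : J -> M) f :
  polyact t f (\sum_(j <- s) F j) = \sum_(j <- s) polyact t f (F j).
Proof. exact: (big_morph _ (polyactDr f) (polyact0r f)). Qed.

Lemma polyact_widen (f : {poly int}) n x : (size f <= n)%N ->
  polyact t f x = \sum_(k < n) iter k t x *~ f`_k.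
Proof.
move=> f_le_n; rewrite /polyact (big_ord_widen n (fun k => iter k t x *~ f`_k) f_le_n).
rewrite big_mkcond /=; apply: eq_bigr => k _.
by case: ltnP => // /(nth_default 0) ->; rewrite mulr0z.
Qed.

Lemma polyactD f g x : polyact t (f + g) x = polyact t f x + polyact t g x.
Proof.
set n := maxn (size f) (size g).
rewrite (@polyact_widen (f + g) n) ?(leq_trans (size_polyD _ _)) //.
rewrite (@polyact_widen f n) ?leq_maxl // (@polyact_widen g n) ?leq_maxr //.
by rewrite -big_split; apply: eq_bigr => k _; rewrite coefD mulrzDr.
Qed.

Lemma polyactN f x : polyact t (- f) x = - polyact t f x.
Proof.
rewrite /polyact size_polyN -sumrN; apply: eq_bigr => k _.
by rewrite coefN mulrNz.
Qed.

Lemma polyactB f g x : polyact t (f - g) x = polyact t f x - polyact t g x.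
Proof. by rewrite polyactD polyactN. Qed.

Lemma polyactC c x : polyact t c%:P x = x *~ c.
Proof. by rewrite (@polyact_widen _ 1) ?size_polyC ?leq_b1 // big_ord1 coefC. Qed.

Lemma polyact1 x : polyact t 1 x = x.
Proof. by rewrite -polyC1 polyactC. Qed.

Lemma polyact_t f x : polyact t f (t x) = t (polyact t f x).
Proof.
rewrite /polyact raddf_sum; apply: eq_bigr => k _.
by rewrite raddfMz -iterSr.
Qed.

Lemma polyact_mulX f x : polyact t (f * 'X) x = polyact t f (t x).
Proof.
rewrite (@polyact_widen _ (size f).+1); last first.
  by rewrite (leq_trans (size_polyMleq _ _)) // size_polyX addn2.
rewrite big_ord_recl /= coefMX eqxx mulr0z add0r /polyact.
by apply: eq_bigr => k _; rewrite coefMX /bump /= add0n -iterSr.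
Qed.

Lemma polyactCM c g x : polyact t (c%:P * g) x = polyact t g x *~ c.
Proof.
rewrite (@polyact_widen _ (size g)); last by rewrite mul_polyC size_scale_leq.
rewrite /polyact mulrz_suml; apply: eq_bigr => k _.
by rewrite coefCM mulrC mulrzA.
Qed.

Lemma polyactM f g x : polyact t (f * g) x = polyact t f (polyact t g x).
Proof.
elim/poly_ind: f x => [|f c IH] x; first by rewrite mul0r /polyact size_poly0 !big_ord0.
rewrite mulrDl mulrAC !polyactD !polyact_mulX IH polyact_t.
by rewrite polyactCM polyactC.
Qed.

Lemma polyactXn k x : polyact t 'X^k x = iter k t x.
Proof.
elim: k x => [|k IH] x; first by rewrite expr0 polyact1.
by rewrite exprSr polyact_mulX IH iterSr.
Qed.

Lemma polyact_subX x : polyact t (1 - 'X) x = x - t x.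
Proof. by rewrite polyactB polyact1 -[X in polyact t X]mul1r polyact_mulX polyact1. Qed.

Lemma in_im1t0 : in_im1t t 0.
Proof. by exists 0; rewrite raddf0 subrr. Qed.

Lemma in_im1tD x y : in_im1t t x -> in_im1t t y -> in_im1t t (x + y).
Proof. by move=> [a ->] [b ->]; exists (a + b); rewrite raddfD opprD addrACA. Qed.

Lemma in_im1tN x : in_im1t t x -> in_im1t t (- x).
Proof. by move=> [a ->]; exists (- a); rewrite raddfN opprK opprB addrC. Qed.

Lemma in_im1t_sum (J : Type) (s : seq J) (F : J -> M) :
  (forall j, in_im1t t (F j)) -> in_im1t t (\sum_(j <- s) F j).
Proof.
move=> imF; elim: s => [|j s IH]; first by rewrite big_nil; exact: in_im1t0.
by rewrite big_cons; apply: in_im1tD.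
Qed.

Lemma in_im1t_polyact_horner1 f x : in_im1t t (polyact t f x - x *~ f.[1]).
Proof.
have [q fE] := horner1_decomp f; exists (polyact t q x).
by rewrite {1}fE polyactD polyactC addrAC subrr add0r polyactM polyact_subX.
Qed.

Variable p : nat.
Hypotheses (p_prime : prime p) (t_p : forall x, iter p t x = x)
  (ker_subX : forall x, x - t x = 0 -> x = 0).

Lemma polyact_Npoly x : polyact t (Npoly p) x = 0.
Proof.
apply: ker_subX; rewrite -polyact_subX -polyactM Npoly_geom.
by rewrite polyactB polyact1 polyactXn t_p subrr.
Qed.

Lemma polyact_pdivides_Npoly f g x :
  pdivides (Npoly p) (f - g) -> polyact t f x = polyact t g x.
Proof.
move=> [h fgE]; apply/eqP; rewrite -subr_eq0 -polyactB fgE polyactM.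
by rewrite polyact_Npoly polyact0r.
Qed.

Lemma in_im1t_muln x : in_im1t t (x *+ p).
Proof.
have := in_im1t_polyact_horner1 (Npoly p) x.
by rewrite polyact_Npoly horner1_Npoly sub0r mulrz_nat => /in_im1tN; rewrite opprK.
Qed.

Lemma polyact_subX_pred_muln : exists G, forall z,
  polyact t ((1 - 'X) ^+ p.-1) z = polyact t G z *+ p.
Proof.
have [G GE] := expr_subX_Npoly p_prime; exists G => z.
by rewrite GE polyactD polyact_Npoly add0r -polyC_natr polyactCM mulrz_nat.
Qed.

Variables (I : eqType) (e : I -> M).
Hypothesis e_basis : represents_basis p t e.

Definition psi (s : seq I) (f : I -> {poly int}) : M :=
  \sum_(i <- s) polyact t (f i) (e i).

Lemma psi_subX s g : psi s (fun i => (1 - 'X) * g i) = psi s g - t (psi s g).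
Proof.
rewrite /psi raddf_sum -sumrB; apply: eq_bigr => i _.
by rewrite polyactM polyact_subX.
Qed.

Lemma psi_pdivides_Npoly s f g :
  (forall i, i \in s -> pdivides (Npoly p) (f i - g i)) -> psi s f = psi s g.
Proof. by move=> fg; apply: eq_big_seq => i /fg; exact: polyact_pdivides_Npoly. Qed.

Lemma psi_in_im1t_lift s f : uniq s -> in_im1t t (psi s f) ->
  exists g, psi s f = psi s g - t (psi s g) /\
    forall i, i \in s -> pdivides (Npoly p) (f i - (1 - 'X) * g i).
Proof.
move=> s_uniq im_f.
have im_f1 : in_im1t t (\sum_(i <- s) e i *~ (f i).[1]).
  have -> : \sum_(i <- s) e i *~ (f i).[1] =
      psi s f - \sum_(i <- s) (polyact t (f i) (e i) - e i *~ (f i).[1]).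
    by rewrite sumrB opprB addrC subrK.
  apply: in_im1tD im_f _; apply/in_im1tN/in_im1t_sum => i.
  exact: in_im1t_polyact_horner1.
have /(seq_choice 0) [g fg] :
    forall i, i \in s -> exists g, pdivides (Npoly p) (f i - (1 - 'X) * g).
  by move=> i si; apply: pdivides_Npoly_subX; exact: (e_basis.2 s _ s_uniq im_f1).
by exists g; split => //; rewrite -psi_subX; apply: psi_pdivides_Npoly.
Qed.

Lemma psi_relation_subX s f : uniq s -> psi s f = 0 ->
  exists g, psi s g = 0 /\
    forall i, i \in s -> pdivides (Npoly p) (f i - (1 - 'X) * g i).
Proof.
move=> s_uniq f_rel.
have [|g [fgE fg]] := psi_in_im1t_lift s_uniq (f := f).
  by rewrite f_rel; exact: in_im1t0.
by exists g; split => //; apply: ker_subX; rewrite -fgE.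
Qed.

Lemma psi_relation_subXn s f k : uniq s -> psi s f = 0 ->
  exists g, psi s g = 0 /\
    forall i, i \in s -> pdivides (Npoly p) (f i - (1 - 'X) ^+ k * g i).
Proof.
move=> s_uniq; elim: k f => [|k IH] f f_rel.
  by exists f; split => // i _; exists 0; rewrite expr0 mul1r subrr mul0r.
have [g [g_rel fg]] := IH f f_rel.
have [h [h_rel gh]] := psi_relation_subX s_uniq g_rel.
exists h; split => // i si.
have [a fgE] := fg i si; have [b ghE] := gh i si.
exists (a + (1 - 'X) ^+ k * b).
rewrite -[f i](subrK ((1 - 'X) ^+ k * g i)) fgE.
by rewrite -[g i](subrK ((1 - 'X) * h i)) ghE exprSr; ring.
Qed.

Lemma psi_relation_pexp s f m : uniq s -> psi s f = 0 -> forall i, i \in s ->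
  exists w, pdivides (Npoly p) (f i - ((p%:Z) ^+ m)%:P * w).
Proof.
move=> s_uniq; elim: m f => [|m IH] f f_rel i si.
  by exists (f i), 0; rewrite expr0 polyC1 mul1r subrr mul0r.
have [G GE] := expr_subX_Npoly p_prime.
have [g [g_rel fg]] := psi_relation_subXn p.-1 s_uniq f_rel.
have [w [b gwE]] := IH g g_rel i si; have [a fgE] := fg i si.
exists (G * w), (a + g i + p%:R * G * b).
have pE : (p%:Z)%:P = p%:R :> {poly int} by rewrite -polyC_natr natz.
rewrite exprS polyCM pE.
rewrite -[f i](subrK ((1 - 'X) ^+ p.-1 * g i)) fgE GE.
by rewrite -[g i](subrK (((p%:Z) ^+ m)%:P * w)) gwE; ring.
Qed.

Lemma psi_relation_pdivides s f : uniq s -> psi s f = 0 ->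
  forall i, i \in s -> pdivides (Npoly p) (f i).
Proof.
move=> s_uniq f_rel i si.
apply: (pdivides_monic_pexp (Npoly_monic (prime_gt0 p_prime)) (prime_gt1 p_prime)).
by move=> m; exact: (@psi_relation_pexp s f m s_uniq f_rel i si).
Qed.

(* [in_impsi] with repeated indices allowed, so that closure under sums is immediate. *)
Definition in_span (x : M) : Prop :=
  exists r : seq (I * {poly int}), x = \sum_(q <- r) polyact t q.2 (e q.1).

Lemma in_span0 : in_span 0.
Proof. by exists [::]; rewrite big_nil. Qed.

Lemma in_spanD x y : in_span x -> in_span y -> in_span (x + y).
Proof. by move=> [r ->] [r' ->]; exists (r ++ r'); rewrite big_cat. Qed.

Lemma in_span_polyact g x : in_span x -> in_span (polyact t g x).
Proof.
move=> [r ->]; exists [seq (q.1, g * q.2) | q <- r].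
by rewrite polyact_sumr big_map; apply: eq_bigr => q _; rewrite polyactM.
Qed.

Lemma in_span_psi s f : in_span (psi s f).
Proof. by exists [seq (i, f i) | i <- s]; rewrite big_map. Qed.

Lemma in_impsiP x : in_impsi t e x <-> in_span x.
Proof.
split=> [[s [f [_ ->]]] | [r xE]]; first exact: in_span_psi.
rewrite {x}xE; elim: r => [|[i g] r [s [f [s_uniq rE]]]].
  by exists [::], (fun=> 0); rewrite !big_nil.
rewrite big_cons /= rE; have [si | si] := boolP (i \in s).
  exists s, (fun j => if j == i then f i + g else f j); split => //.
  rewrite (bigD1_seq i) //= [in RHS](bigD1_seq i) //= eqxx polyactD.
  rewrite addrA [polyact t g _ + _]addrC; congr (_ + _).
  by apply: eq_bigr => j /negbTE ->.
exists (i :: s), (fun j => if j == i then g else f j); split; first by rewrite /= si.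
rewrite big_cons eqxx; congr (_ + _); apply: eq_big_seq => j sj.
by case: eqP sj => // ->; rewrite (negPf si).
Qed.

Lemma in_span_sub_subXn k x : exists z, in_span (x - polyact t ((1 - 'X) ^+ k) z).
Proof.
elim: k x => [|k IH] x; first by exists x; rewrite expr0 polyact1 subrr; exact: in_span0.
have [z zE] := IH x; have [s [c [_ [y yE]]]] := e_basis.1 z.
set S := \sum_(i <- s) e i *~ c i in yE.
have span_S : in_span S.
  exists [seq (i, (c i)%:P) | i <- s].
  by rewrite big_map; apply: eq_bigr => i _; rewrite polyactC.
exists y; rewrite exprSr polyactM polyact_subX -yE polyactBr opprB addrCA addrC.
exact: in_spanD zE (in_span_polyact _ span_S).
Qed.

Lemma in_span_of_subX w : in_span (w - t w) -> in_span w.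
Proof.
move=> /in_impsiP [s [f [s_uniq wE]]].
have [|g [fgE _]] := psi_in_im1t_lift s_uniq (f := f); first by exists w; rewrite wE.
suff -> : w = psi s g by exact: in_span_psi.
apply/subr0_eq/ker_subX.
by rewrite -polyact_subX polyactBr !polyact_subX wE -/(psi s f) fgE subrr.
Qed.

Lemma in_span_of_subXn k w : in_span (polyact t ((1 - 'X) ^+ k) w) -> in_span w.
Proof.
elim: k w => [|k IH] w; first by rewrite expr0 polyact1.
by rewrite exprSr polyactM polyact_subX => /IH /in_span_of_subX.
Qed.

End ZtModule.

Theorem lemma6p7 (p : nat) (M : zmodType) (t : M -> M)
  (hp : prime p)
  (t_add : forall x y : M, t (x + y) = t x + t y)
  (t_p : forall x : M, iter p t x = x)
  (ker0 : forall x : M, x - t x = 0 -> x = 0) :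
  (forall x : M, polyact t (Npoly p) x = 0) /\
  (forall x : M, in_im1t t (x *+ p)) /\
  (forall (I : eqType) (e : I -> M), represents_basis p t e ->
     (* psi injective *)
     (forall (s : seq I) (f : I -> {poly int}), uniq s ->
        \sum_(i <- s) polyact t (f i) (e i) = 0 ->
        forall i, i \in s -> pdivides (Npoly p) (f i)) /\
     (* coker psi uniquely p-divisible *)
     (forall x : M, exists y : M, in_impsi t e (x - y *+ p)) /\
     (forall y : M, in_impsi t e (y *+ p) -> in_impsi t e y)).
Proof.
have [G GE] := polyact_subX_pred_muln t_add hp t_p ker0.
split; first exact: (polyact_Npoly t_add t_p ker0).
split; first exact: (in_im1t_muln t_add t_p ker0).
move=> I e e_basis; split.
  by move=> s f; exact: (psi_relation_pdivides t_add hp t_p ker0 e_basis).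
split=> [x | y /in_impsiP py_span].
  have [z zE] := in_span_sub_subXn t_add e_basis p.-1 x.
  by exists (polyact t G z); apply/in_impsiP; rewrite -GE.
apply/in_impsiP/(in_span_of_subXn t_add t_p ker0 e_basis (k := p.-1)).
by rewrite GE -polyactMnr //; exact: in_span_polyact.
Qed.
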